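(* For $n\ge 0$ and a field $k$, let $V_n(k)=M_n(k)\oplus k^n\oplus (k^n)^*$ be the space of triples $\Sigma=(A,B,C)$ with $A\in M_n(k)$, $B\in k^n$ (column), $C\in (k^n)^*$ (row), with $GL_n(k)$ acting by $g\cdot(A,B,C)=(gAg^{-1},gB,Cg^{-1})$. Call $\Sigma$ completely controllable if the $n\times n$ matrix $[B\ AB\ \cdots\ A^{n-1}B]$ is invertible, and completely observable if the $n\times n$ matrix with rows $C, CA,\dots,CA^{n-1}$ is invertible. Let $\mathrm{sys}^{cc}_n$ and $\mathrm{sys}^{co}_n$ be the orbit spaces of the completely controllable, resp. completely observable, triples, and $\overline{M}$ the disjoint union over $n\ge0$ of $\mathrm{sys}^{cc}_n\cup\mathrm{sys}^{co}_n$. Then $\overline{M}$ is of $\mathbb{F}_1$-type: for every finite field $\mathbb{F}_q$, the number of $\mathbb{F}_q$-points of $\mathrm{sys}^{cc}_n\cup\mathrm{sys}^{co}_n$ is $q^{2n}+q^{2n-1}$ for $n\ge1$ (and $1$ for $n=0$), so that $\#\overline{M}(\mathbb{F}_q)=\sum_{k\ge0}q^k$; consequently its $\mathbb{F}_1$-motive is $\prod_{k=0}^{\infty}\frac{s-k}{2\pi}$.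
   Context: The $\mathbb{F}_q$-points of these orbit spaces are the $GL_n(\mathbb{F}_q)$-orbits of triples over $\mathbb{F}_q$ that are completely controllable or completely observable. A variety (or countable disjoint union of varieties) $X$ is of $\mathbb{F}_1$-type if there are integers $a_k$ with $\#X(\mathbb{F}_q)=\sum_k a_kq^k$ for all finite fields $\mathbb{F}_q$; its (Manin) $\mathbb{F}_1$-motive is then $\prod_k\left(\frac{s-k}{2\pi}\right)^{a_k}$ (e.g. the motive of $\mathbb{A}^n$ is $\frac{s-n}{2\pi}$ and that of $\mathbb{P}^n$ is $\prod_{k=0}^n\frac{s-k}{2\pi}$). *)

From HB Require Import structures.
From mathcomp Require Import all_boot all_order all_algebra all_field.
Set Implicit Arguments. Unset Strict Implicit. Unset Printing Implicit Defensive.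
Import GRing.Theory.
Local Open Scope ring_scope.

Definition triple (F : fieldType) (n : nat) : Type :=
  ('M[F]_n * 'cV[F]_n * 'rV[F]_n)%type.

Definition trA {F : fieldType} {n} (s : triple F n) : 'M[F]_n := s.1.1.
Definition trB {F : fieldType} {n} (s : triple F n) : 'cV[F]_n := s.1.2.
Definition trC {F : fieldType} {n} (s : triple F n) : 'rV[F]_n := s.2.

Definition ctrl_mx {F : fieldType} {n} (s : triple F n) : 'M[F]_n :=
  \matrix_(i < n, j < n) ((trA s ^+ j) *m trB s) i 0.

Definition obs_mx {F : fieldType} {n} (s : triple F n) : 'M[F]_n :=
  \matrix_(i < n, j < n) (trC s *m (trA s ^+ i)) 0 j.

Definition completely_controllable {F : fieldType} {n} (s : triple F n) : bool :=
  ctrl_mx s \in unitmx.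
Definition completely_observable {F : fieldType} {n} (s : triple F n) : bool :=
  obs_mx s \in unitmx.

Definition gl_act {F : fieldType} {n} (g : 'M[F]_n) (s : triple F n) : triple F n :=
  (g *m trA s *m invmx g, g *m trB s, trC s *m invmx g).

Definition gl_orbit (F : finFieldType) (n : nat) (s : triple F n) : {set triple F n} :=
  [set t | [exists g : 'M[F]_n, (g \in unitmx) && (t == gl_act g s)]].

Definition sys_points (F : finFieldType) (n : nat) : {set {set triple F n}} :=
  [set gl_orbit s | s in [pred s : triple F n |
                          completely_controllable s || completely_observable s]].

Definition num_sys_points (F : finFieldType) (n : nat) : nat := #|sys_points F n|.

From mathcomp Require Import all_boot all_order all_algebra all_field.
From mathcomp Require Import zify.
Set Implicit Arguments. Unset Strict Implicit. Unset Printing Implicit Defensive.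
Import GRing.Theory.
Local Open Scope ring_scope.

(* A completely controllable triple has trivial stabiliser, and conjugating by
   the inverse of its controllability matrix brings it to the unique form
   (companion matrix of a monic p of degree n, e_1, c).  Hence cc-triples are
   GL_n x {(p, c)}, and by transposition co-triples are equinumerous.  Reading
   columns as polynomials modulo p, every row c is f |-> [X^(n-1)](f r mod p)
   for a unique r of degree < n, and (companion p, e_1, c) is observable iff p
   and r are coprime.  Sorting all pairs (p, r) by the degree k of their gcd
   gives q^(2n) = sum_k q^k N_(n-k), so the number N_n of coprime pairs is
   q^(2n) - q^(2n-1) for n >= 1, and inclusion-exclusion yields
   #orbits = 2 q^(2n) - N_n = q^(2n) + q^(2n-1). *)

Section MonicRowPoly.
Variables (R : nzRingType) (n : nat).
Implicit Types (u : 'rV[R]_n) (p : {poly R}).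

Definition rVmonic u : {poly R} := 'X^n + rVpoly u.

Lemma size_rVpoly u : (size (rVpoly u) <= n)%N.
Proof. exact: size_poly. Qed.

Lemma size_rVmonic u : size (rVmonic u) = n.+1.
Proof. by rewrite size_polyDl size_polyXn // ltnS size_rVpoly. Qed.

Lemma rVmonic_monic u : rVmonic u \is monic.
Proof.
by rewrite monicE lead_coefDl ?lead_coefXn // size_polyXn ltnS size_rVpoly.
Qed.

Lemma rVmonic_neq0 u : rVmonic u != 0.
Proof. by rewrite -size_poly_eq0 size_rVmonic. Qed.

Lemma rVpoly_inj : injective (@rVpoly R n).
Proof. exact: can_inj rVpolyK. Qed.

Lemma rVmonic_inj : injective rVmonic.
Proof. by move=> u v /addrI; apply: rVpoly_inj. Qed.

Lemma size_monic_subXn p :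
  p \is monic -> size p = n.+1 -> (size (p - 'X^n)%R <= n)%N.
Proof.
move=> mp sp; apply/leq_sizeP => j hj; rewrite coefB coefXn.
case: (ltngtP j n) => [|hjn|->]; first by rewrite ltnNge hj.
  by rewrite nth_default ?sp // subr0.
by move: mp; rewrite monicE /lead_coef sp => /eqP ->; rewrite subrr.
Qed.

Lemma rVmonicK p :
  p \is monic -> size p = n.+1 -> rVmonic (poly_rV (p - 'X^n)) = p.
Proof.
by move=> mp sp; rewrite /rVmonic poly_rV_K ?size_monic_subXn // addrC subrK.
Qed.

End MonicRowPoly.

Definition coprime_pair (F : fieldType) n (x : 'rV[F]_n * 'rV[F]_n) : bool :=
  coprimep (rVmonic x.1) (rVpoly x.2).

Section GcdDecomposition.
Variables (F : fieldType) (n k : nat).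
Hypothesis le_kn : (k <= n)%N.

Definition mul_monic_pair (z : 'rV[F]_k * ('rV[F]_(n - k) * 'rV[F]_(n - k))) :
    'rV[F]_n * 'rV[F]_n :=
  (poly_rV (rVmonic z.1 * rVmonic z.2.1 - 'X^n),
   poly_rV (rVmonic z.1 * rVpoly z.2.2)).

Lemma rVmonic_mul_monic_pair z :
  rVmonic (mul_monic_pair z).1 = rVmonic z.1 * rVmonic z.2.1.
Proof.
rewrite rVmonicK ?monicMl ?rVmonic_monic //.
by rewrite size_monicM ?rVmonic_neq0 ?rVmonic_monic // !size_rVmonic; lia.
Qed.

Lemma rVpoly_mul_monic_pair z :
  rVpoly (mul_monic_pair z).2 = rVmonic z.1 * rVpoly z.2.2.
Proof.
rewrite poly_rV_K // (leq_trans (size_polyMleq _ _)) // size_rVmonic addSn.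
by rewrite -[X in (_ <= X)%N](subnKC le_kn) leq_add2l size_rVpoly.
Qed.

Lemma gcdp_mul_monic_pair z : coprime_pair z.2 ->
  gcdp (rVmonic (mul_monic_pair z).1) (rVpoly (mul_monic_pair z).2) %= rVmonic z.1.
Proof.
move=> cop; rewrite rVmonic_mul_monic_pair rVpoly_mul_monic_pair.
apply: eqp_trans (gcdp_mul2l _ _ _) _.
by rewrite -{2}(mulr1 (rVmonic z.1)) eqp_mull // gcdp_eqp1.
Qed.

Lemma mul_monic_pair_inj :
  {in [pred z | coprime_pair z.2] &, injective mul_monic_pair}.
Proof.
move=> [d1 x1] [d2 x2] c1 c2 e.
have ed : d1 = d2.
  apply: rVmonic_inj; apply/eqP; rewrite -eqp_monic ?rVmonic_monic //.
  apply: eqp_trans (gcdp_mul_monic_pair c2); rewrite -e eqp_sym.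
  exact: gcdp_mul_monic_pair c1.
subst d2; case: x1 x2 e {c1 c2} => [a1 b1] [a2 b2] e.
have : rVmonic (mul_monic_pair (d1, (a1, b1))).1
     = rVmonic (mul_monic_pair (d1, (a2, b2))).1 by rewrite e.
rewrite !rVmonic_mul_monic_pair => /(mulfI (rVmonic_neq0 d1)) /rVmonic_inj /= ->.
have : rVpoly (mul_monic_pair (d1, (a1, b1))).2
     = rVpoly (mul_monic_pair (d1, (a2, b2))).2 by rewrite e.
by rewrite !rVpoly_mul_monic_pair => /(mulfI (rVmonic_neq0 d1)) /rVpoly_inj /= ->.
Qed.

Lemma mul_monic_pair_surj x :
  size (gcdp (rVmonic x.1) (rVpoly x.2)) = k.+1 ->
  exists2 z, coprime_pair z.2 & x = mul_monic_pair z.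
Proof.
set P := rVmonic x.1; set R := rVpoly x.2; set G := gcdp P R => sz_G.
have G0 : G != 0 by rewrite -size_poly_eq0 sz_G.
have c0 : (lead_coef G)^-1 != 0 by rewrite invr_eq0 lead_coef_eq0.
pose g := (lead_coef G)^-1 *: G.
have mg : g \is monic by rewrite monicE lead_coefZ mulVf ?lead_coef_eq0.
have sz_g : size g = k.+1 by rewrite size_scale.
have g0 : g != 0 by rewrite -size_poly_eq0 sz_g.
have gP : g %| P by rewrite dvdpZl ?dvdp_gcdl.
have gR : g %| R by rewrite dvdpZl ?dvdp_gcdr.
have mPg : P %/ g \is monic.
  by have := rVmonic_monic x.1; rewrite -/P -{1}(divpK gP) monicMr.
have sz_Pg : size (P %/ g) = (n - k).+1.
  by rewrite size_divp // sz_g size_rVmonic subSn.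
have sz_Rg : (size (R %/ g)%R <= n - k)%N.
  by rewrite size_divp // sz_g leq_sub2r ?size_rVpoly.
exists (poly_rV (g - 'X^k), (poly_rV (P %/ g - 'X^(n - k)), poly_rV (R %/ g))).
  rewrite /coprime_pair /= rVmonicK // poly_rV_K // !divpZr //.
  rewrite coprimepZl ?coprimepZr ?invr_eq0 ?lead_coef_eq0 //.
  by apply: coprimep_div_gcd; rewrite rVmonic_neq0.
rewrite /mul_monic_pair /= !rVmonicK // poly_rV_K // !(mulrC g) !divpK //.
by rewrite /P /rVmonic addrC addKr !rVpolyK -surjective_pairing.
Qed.

End GcdDecomposition.

Section CoprimePairs.
Variable F : finFieldType.
Local Notation q := #|F|.

Definition coprime_pairs n : {set 'rV[F]_n * 'rV[F]_n} := [set x | coprime_pair x].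

Lemma card_gcdp_size n k : (k <= n)%N ->
  #|[set x : 'rV[F]_n * 'rV[F]_n | size (gcdp (rVmonic x.1) (rVpoly x.2)) == k.+1]|
  = (q ^ k * #|coprime_pairs (n - k)|)%N.
Proof.
move=> le_kn.
have -> : [set x : 'rV[F]_n * 'rV[F]_n | size (gcdp (rVmonic x.1) (rVpoly x.2)) == k.+1]
    = @mul_monic_pair F n k @: setX setT (coprime_pairs (n - k)).
  apply/setP => x; rewrite inE; apply/idP/imsetP => [/eqP|[z]].
    by case/(mul_monic_pair_surj le_kn) => z cz ->; exists z; rewrite ?inE.
  rewrite !inE => cz ->.
  by rewrite (eqp_size (gcdp_mul_monic_pair le_kn cz)) size_rVmonic.
rewrite card_in_imset; first by rewrite cardsX cardsT card_mx mul1n.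
by move=> z1 z2; rewrite !inE; apply: mul_monic_pair_inj.
Qed.

Lemma card_pairs_gcdp_partition n :
  (q ^ (2 * n) = \sum_(k < n.+1) q ^ k * #|coprime_pairs (n - k)|)%N.
Proof.
pose gsize (x : 'rV[F]_n * 'rV[F]_n) := size (gcdp (rVmonic x.1) (rVpoly x.2)).
pose gdeg x : 'I_n.+1 := inord (gsize x).-1.
have gsizeE x : gsize x = (gdeg x).+1.
  have gt0 : (0 < gsize x)%N.
    by rewrite lt0n size_poly_eq0 gcdp_eq0 negb_and rVmonic_neq0.
  have le_n : (gsize x <= n.+1)%N.
    by rewrite -(size_rVmonic x.1) dvdp_leq ?rVmonic_neq0 ?dvdp_gcdl.
  by rewrite inordK (prednK gt0).
have -> : (q ^ (2 * n) = #|[set: 'rV[F]_n * 'rV[F]_n]|)%N.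
  by rewrite cardsT card_prod card_mx mul1n -expnD addnn mul2n.
rewrite -sum1_card (partition_big gdeg xpredT) //=; apply: eq_bigr => k _.
rewrite -card_gcdp_size ?leq_ord // sum1dep_card; apply: eq_card => x.
by rewrite !inE -/(gsize x) gsizeE eqSS.
Qed.

Lemma card_coprime_pairsS n :
  (#|coprime_pairs n.+1| + q ^ (2 * n).+1 = q ^ (2 * n.+1))%N.
Proof.
rewrite (card_pairs_gcdp_partition n.+1) big_ord_recl subn0 expn0 mul1n.
congr (_ + _)%N; rewrite expnS (card_pairs_gcdp_partition n) big_distrr /=.
by apply: eq_bigr => k _; rewrite /bump add1n subSS expnS mulnA.
Qed.

End CoprimePairs.

Lemma unitmx_kerP (F : fieldType) k (A : 'M[F]_k) :
  reflect (forall v : 'cV_k, A *m v = 0 -> v = 0) (A \in unitmx).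
Proof.
apply: (iffP idP) => [uA v Av0|ker0]; first by rewrite -(mulKmx uA v) Av0 mulmx0.
rewrite -unitmx_tr -row_free_unit; apply: inj_row_free => v vA0.
apply: trmx_inj; rewrite trmx0; apply: ker0.
by apply: trmx_inj; rewrite trmx_mul trmxK vA0 trmx0.
Qed.

Lemma coprimep_modp_kerP (F : fieldType) (p r : {poly F}) : p != 0 ->
  reflect (forall f : {poly F}, (size f < size p)%N -> (f * r) %% p = 0 -> f = 0)
          (coprimep p r).
Proof.
move=> p0; apply: (iffP idP) => [cop f szf /modp_eq0P|ker0].
  rewrite Gauss_dvdpl // => pf; apply/eqP; apply: contraTT szf => f0.
  by rewrite -leqNgt dvdp_leq.
apply: contraT => ncop; set g := gcdp p r.
have g0 : g != 0 by rewrite gcdp_eq0 negb_and p0.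
have szg : (1 < size g)%N.
  by rewrite ltn_neqAle lt0n size_poly_eq0 eq_sym size_poly_eq1 gcdp_eqp1 ncop.
have szpg : (size (p %/ g)%R < size p)%N.
  by rewrite size_divp // ltn_subrL -subn1 subn_gt0 szg lt0n size_poly_eq0 p0.
have pg0 : p %/ g != 0.
  by rewrite divp_eq0 !negb_or p0 g0 -leqNgt dvdp_leq ?dvdp_gcdl.
suff /eqP : p %/ g = 0 by rewrite (negbTE pg0).
apply: ker0 => //; apply/modp_eq0P.
rewrite -[r in _ * r](divpK (dvdp_gcdr p r)) -/g [_ %/ g * g]mulrC mulrA.
by rewrite divpK ?dvdp_mulr ?dvdp_gcdl.
Qed.

Lemma modp_eq0_coefs (F : fieldType) m (p s : {poly F}) : size p = m.+2 ->
  (forall i, (i < m.+1)%N -> (('X^i * s) %% p)`_m = 0) -> s %% p = 0.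
Proof.
move=> szp top0; apply/eqP; apply: contraT => t0; set t := s %% p in t0.
have [d szt] : exists d, size t = d.+1.
  by exists (size t).-1; rewrite prednK // size_poly_gt0.
have le_dm : (d <= m)%N.
  by rewrite -ltnS -szt -ltnS -szp ltn_modp -size_poly_gt0 szp.
have := top0 (m - d)%N (leq_ltn_trans (leq_subr d m) (ltnSn m)).
rewrite -modp_mul -/t modp_small; last first.
  by rewrite mulrC size_mulXn // szt szp addnS subnK.
rewrite coefXnM ltnNge leq_subr /= subKn // => lead0.
by move: t0; rewrite -lead_coef_eq0 /lead_coef szt lead0 eqxx.
Qed.

Section Companion.
Variables (F : fieldType) (m : nat).
Local Notation n := m.+1.
Implicit Types (w u : 'rV[F]_n) (v : 'cV[F]_n).

Definition cVpoly v : {poly F} := rVpoly v^T.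

Lemma cVpoly_inj : injective cVpoly.
Proof. by move=> v1 v2 /rVpoly_inj; apply: trmx_inj. Qed.

Lemma cVpoly_eq0 v : (cVpoly v == 0) = (v == 0).
Proof. by rewrite -(inj_eq cVpoly_inj) /cVpoly trmx0 linear0. Qed.

Lemma coef_cVpoly v (i : 'I_n) : (cVpoly v)`_i = v i 0.
Proof. by rewrite coef_rVpoly_ord mxE. Qed.

Lemma size_cVpoly v : (size (cVpoly v) <= n)%N.
Proof. exact: size_rVpoly. Qed.

Lemma poly_cVK (f : {poly F}) : (size f <= n)%N -> cVpoly (poly_rV f)^T = f.
Proof. by move=> szf; rewrite /cVpoly trmxK poly_rV_K. Qed.

Definition rVcompanion w : 'M[F]_n :=
  \matrix_(i, j) if (j.+1 < n)%N then (i == j.+1 :> nat)%:R else - w 0 i.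

Lemma rVcompanion_mulmx_coef w v (i : 'I_n) :
  (rVcompanion w *m v) i 0 = ('X * cVpoly v)`_i - v ord_max 0 * w 0 i.
Proof.
rewrite mxE big_ord_recr /= mxE ltnn mulNr mulrC coefXM; congr (_ - _).
case: i => [[|i] lt_in] /=.
  by rewrite big1 // => j _; rewrite mxE /= ltnS ltn_ord mul0r.
have lt_im : (i < m)%N by [].
rewrite (bigD1 (Ordinal lt_im)) //= big1 ?addr0.
  rewrite mxE /= ltnS lt_im eqxx mul1r (coef_cVpoly _ (Ordinal (ltnW lt_in))).
  by congr (v _ 0); apply: val_inj.
move=> j; rewrite -val_eqE /= => neq_ji.
by rewrite mxE /= ltnS ltn_ord eqSS eq_sym (negbTE neq_ji) mul0r.
Qed.

Lemma cVpoly_companion w v :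
  cVpoly (rVcompanion w *m v) = 'X * cVpoly v - v ord_max 0 *: rVmonic w.
Proof.
apply/polyP => i; rewrite coefB coefZ /rVmonic coefD coefXn.
case: (ltnP i n) => [lt_in|le_ni].
  rewrite (coef_cVpoly _ (Ordinal lt_in)) rVcompanion_mulmx_coef.
  by rewrite (coef_rVpoly_ord _ (Ordinal lt_in)) ltn_eqF // add0r.
rewrite [LHS]nth_default ?(leq_trans (size_cVpoly _)) //.
rewrite [(rVpoly w)`_i]nth_default ?(leq_trans (size_rVpoly _)) // addr0 coefXM.
have [->|ne_in] := eqVneq i n.
  by rewrite (coef_cVpoly _ ord_max) mulr1 subrr.
have lt_ni : (n < i)%N by rewrite ltn_neqAle eq_sym ne_in.
rewrite mulr0 subr0; case: i lt_ni {le_ni ne_in} => // i lt_ni /=.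
by rewrite nth_default // (leq_trans (size_cVpoly _)).
Qed.

Lemma cVpoly_companion_mod w v :
  cVpoly (rVcompanion w *m v) = ('X * cVpoly v) %% rVmonic w.
Proof.
have -> : 'X * cVpoly v =
    (v ord_max 0)%:P * rVmonic w + cVpoly (rVcompanion w *m v).
  by rewrite cVpoly_companion mul_polyC addrC subrK.
by rewrite modp_addl_mul_small // size_rVmonic ltnS size_cVpoly.
Qed.

Lemma cVpoly_companionX w v i :
  cVpoly (rVcompanion w ^+ i *m v) = ('X^i * cVpoly v) %% rVmonic w.
Proof.
elim: i => [|i IHi].
  by rewrite expr0 mul1mx mul1r modp_small // size_rVmonic ltnS size_cVpoly.
by rewrite exprS -mulmxA cVpoly_companion_mod IHi modp_mul exprS mulrA.
Qed.

Definition residue_form w u : 'rV[F]_n :=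
  \row_j ((('X^j * rVpoly u) %% rVmonic w)`_m).

Lemma cVpolyE v : cVpoly v = \sum_(i < n) v i 0 *: 'X^i.
Proof.
rewrite {1}[v]matrix_sum_delta /cVpoly !linear_sum; apply: eq_bigr => i _.
by rewrite big_ord1 !linearZ /= trmx_delta rVpoly_delta.
Qed.

Lemma residue_form_mulmx w u v :
  (residue_form w u *m v) 0 0 = ((cVpoly v * rVpoly u) %% rVmonic w)`_m.
Proof.
rewrite mxE cVpolyE mulr_suml.
rewrite (big_morph (fun p => p %% rVmonic w) (modpD _) (mod0p _)) coef_sum.
by apply: eq_bigr => j _; rewrite mxE -scalerAl modpZl coefZ mulrC.
Qed.

Lemma obs_mx_companion_mulmx w u (B : 'cV[F]_n) v :
  (obs_mx (rVcompanion w, B, residue_form w u) *m v == 0) =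
  ((cVpoly v * rVpoly u) %% rVmonic w == 0).
Proof.
set O := obs_mx _.
have obs_coef (i : 'I_n) :
    (O *m v) i 0 = (('X^i * (cVpoly v * rVpoly u)) %% rVmonic w)`_m.
  have -> : (O *m v) i 0 = ((residue_form w u *m rVcompanion w ^+ i) *m v) 0 0.
    by rewrite !mxE; apply: eq_bigr => j _; rewrite mxE.
  rewrite -mulmxA residue_form_mulmx cVpoly_companionX mulrC modp_mul.
  by rewrite mulrCA [rVpoly u * _]mulrC.
apply/eqP/eqP => [ker0|fu0].
  apply: (modp_eq0_coefs (size_rVmonic w)) => i lt_in.
  by rewrite -(obs_coef (Ordinal lt_in)) ker0 mxE.
apply/matrixP => i j; rewrite (ord1 j) obs_coef mxE.
by rewrite -modp_mul fu0 mulr0 mod0p coef0.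
Qed.

Lemma observable_companion w u (B : 'cV[F]_n) :
  completely_observable (rVcompanion w, B, residue_form w u) =
  coprimep (rVmonic w) (rVpoly u).
Proof.
have szp : size (rVmonic w) = n.+1 := size_rVmonic w.
apply/unitmx_kerP/(coprimep_modp_kerP _ (rVmonic_neq0 w)) => ker0.
  move=> f; rewrite szp ltnS => szf fu0; rewrite -(poly_cVK szf).
  apply/eqP; rewrite cVpoly_eq0; apply/eqP/ker0/eqP.
  by rewrite obs_mx_companion_mulmx poly_cVK ?fu0.
move=> v /eqP; rewrite obs_mx_companion_mulmx => /eqP /ker0.
by rewrite szp ltnS size_cVpoly => /(_ isT) /eqP; rewrite cVpoly_eq0 => /eqP.
Qed.

Lemma residue_form_inj w : injective (residue_form w).
Proof.
move=> u1 u2 eq_u; apply: rVpoly_inj; apply/eqP; rewrite -subr_eq0; apply/eqP.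
rewrite -[LHS](@modp_small _ _ (rVmonic w)); last first.
  by rewrite size_rVmonic ltnS -linearB size_rVpoly.
apply: (modp_eq0_coefs (size_rVmonic w)) => i lt_in.
have := congr1 (fun r : 'rV[F]_n => r 0 (Ordinal lt_in)) eq_u; rewrite /= !mxE.
by rewrite mulrBr modpD modpN coefB => ->; rewrite subrr.
Qed.

End Companion.

Section Action.
Variables (F : fieldType) (n : nat).
Implicit Types (g h A : 'M[F]_n) (s : triple F n).

Lemma invmxM g h : g \in unitmx -> h \in unitmx ->
  invmx (g *m h) = invmx h *m invmx g.
Proof.
move=> ug uh; have ugh : g *m h \in unitmx by rewrite unitmx_mul ug uh.
have inv_gh : (g *m h) *m (invmx h *m invmx g) = 1%:M.
  by rewrite mulmxA -(mulmxA g) mulmxV // mulmx1 mulmxV.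
by rewrite -[RHS](mulKmx ugh) inv_gh mulmx1.
Qed.

Lemma gl_actM g h s : g \in unitmx -> h \in unitmx ->
  gl_act g (gl_act h s) = gl_act (g *m h) s.
Proof. by move=> ug uh; rewrite /gl_act /trA /trB /trC /= invmxM // !mulmxA. Qed.

Lemma gl_act1 s : gl_act 1%:M s = s.
Proof. by case: s => [[A B] C]; rewrite /gl_act /= invmx1 mul1mx !mulmx1 mul1mx. Qed.

Lemma expmx_conj g A k : g \in unitmx ->
  (g *m A *m invmx g) ^+ k = g *m A ^+ k *m invmx g.
Proof.
move=> ug; elim: k => [|k IHk]; first by rewrite !expr0 -idmxE mulmx1 mulmxV.
rewrite !exprS IHk -!mulmxE !mulmxA -[_ *m invmx g *m g]mulmxA mulVmx //.
by rewrite mulmx1.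
Qed.

Lemma ctrl_mx_act g s : g \in unitmx -> ctrl_mx (gl_act g s) = g *m ctrl_mx s.
Proof.
move=> ug; apply/matrixP => i j; rewrite [LHS]mxE /trA /trB /= expmx_conj //.
rewrite mulmxA mulmxKV // -mulmxA !mxE.
by apply: eq_bigr => k _; rewrite [ctrl_mx _ _ _]mxE.
Qed.

Lemma obs_mx_act g s : g \in unitmx -> obs_mx (gl_act g s) = obs_mx s *m invmx g.
Proof.
move=> ug; apply/matrixP => i j; rewrite [LHS]mxE /trA /trC /= expmx_conj //.
rewrite !mulmxA mulmxKV //.
by rewrite !mxE; apply: eq_bigr => k _; rewrite !mxE.
Qed.

Lemma controllable_act g s : g \in unitmx ->
  completely_controllable (gl_act g s) = completely_controllable s.
Proof.
by move=> ug; rewrite /completely_controllable ctrl_mx_act // unitmx_mul ug.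
Qed.

Lemma observable_act g s : g \in unitmx ->
  completely_observable (gl_act g s) = completely_observable s.
Proof.
move=> ug.
by rewrite /completely_observable obs_mx_act // unitmx_mul unitmx_inv ug andbT.
Qed.

Definition dual_triple s : triple F n := ((trA s)^T, (trC s)^T, (trB s)^T).

Lemma dual_tripleK : involutive dual_triple.
Proof. by case=> [[A B] C]; rewrite /dual_triple /trA /trB /trC /= !trmxK. Qed.

Lemma trmxX A k : (A ^+ k)^T = A^T ^+ k.
Proof.
elim: k => [|k IHk]; first by rewrite !expr0 -idmxE trmx1.
by rewrite [in LHS]exprSr exprS -!mulmxE trmx_mul IHk.
Qed.

Lemma obs_mx_dual s : obs_mx (dual_triple s) = (ctrl_mx s)^T.
Proof.
apply/matrixP => i j; rewrite !mxE /dual_triple /trA /trB /trC /= -trmxX.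
by apply: eq_bigr => k _; rewrite !mxE mulrC.
Qed.

End Action.

Section Orbits.
Variables (F : finFieldType) (n : nat).
Implicit Types (g : 'M[F]_n) (s t : triple F n).

Definition GLset : {set 'M[F]_n} := [set g | g \in unitmx].

Definition cc_or_co : {set triple F n} :=
  [set s | completely_controllable s || completely_observable s].

Lemma gl_orbitE s : gl_orbit s = (gl_act^~ s) @: GLset.
Proof.
apply/setP => t; rewrite inE.
apply/existsP/imsetP => [[g /andP[ug /eqP ->]]|[g]].
  by exists g; rewrite ?inE.
by rewrite inE => ug ->; exists g; rewrite ug eqxx.
Qed.

Lemma gl_orbit_refl s : s \in gl_orbit s.
Proof.
by rewrite gl_orbitE; apply/imsetP; exists 1%:M; rewrite ?inE ?unitmx1 ?gl_act1.
Qed.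

Lemma gl_orbit_sub s t : t \in gl_orbit s -> gl_orbit t \subset gl_orbit s.
Proof.
rewrite !gl_orbitE => /imsetP[g]; rewrite inE => ug ->.
apply/subsetP => x /imsetP[h]; rewrite inE => uh ->.
by apply/imsetP; exists (h *m g); rewrite ?inE ?unitmx_mul ?uh ?ug ?gl_actM.
Qed.

Lemma gl_orbit_sym s t : t \in gl_orbit s -> s \in gl_orbit t.
Proof.
rewrite !gl_orbitE => /imsetP[g]; rewrite inE => ug ->.
apply/imsetP; exists (invmx g); rewrite ?inE ?unitmx_inv //.
by rewrite gl_actM ?unitmx_inv // mulVmx // gl_act1.
Qed.

Lemma gl_orbit_eq s t : t \in gl_orbit s -> gl_orbit t = gl_orbit s.
Proof.
move=> st; apply/eqP; rewrite eqEsubset gl_orbit_sub //.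
exact/gl_orbit_sub/gl_orbit_sym.
Qed.

Lemma card_gl_orbit s : s \in cc_or_co -> #|gl_orbit s| = #|GLset|.
Proof.
rewrite inE gl_orbitE => cs; apply: card_in_imset => g h; rewrite !inE => ug uh.
case/orP: cs => [cc|co] eq_gh.
  by apply: (can_inj (mulmxK cc)); rewrite /= -!ctrl_mx_act ?eq_gh.
apply: (can_inj invmxK); apply: (can_inj (mulKmx co)).
by rewrite /= -!obs_mx_act ?eq_gh.
Qed.

Lemma sys_pointsE : sys_points F n = @gl_orbit F n @: cc_or_co.
Proof.
apply/setP => A; apply/imsetP/imsetP => -[s cs ->]; exists s => //.
  by rewrite inE.
by move: cs; rewrite inE.
Qed.

Lemma gl_orbit_sub_cc_or_co s : s \in cc_or_co -> gl_orbit s \subset cc_or_co.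
Proof.
rewrite gl_orbitE !inE => cs; apply/subsetP => t /imsetP[g]; rewrite inE => ug ->.
by rewrite inE controllable_act // observable_act.
Qed.

Lemma partition_sys_points : partition (sys_points F n) cc_or_co.
Proof.
rewrite sys_pointsE; apply/and3P; split.
- apply/eqP/setP => t; apply/bigcupP/idP => [[_ /imsetP[s cs ->]]|ct].
    by apply/subsetP/gl_orbit_sub_cc_or_co.
  by exists (gl_orbit t); [apply/imsetP; exists t | apply: gl_orbit_refl].
- apply/trivIsetP => _ _ /imsetP[s _ ->] /imsetP[s' _ ->] neq.
  rewrite -setI_eq0; apply/eqP/setP => t; rewrite inE [in RHS]inE.
  apply/negP => /andP[ts ts']; move: neq.
  by rewrite -(gl_orbit_eq ts) -(gl_orbit_eq ts') eqxx.
- apply/imsetP => -[s _ /setP /(_ s)]; by rewrite gl_orbit_refl inE.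
Qed.

Lemma num_sys_points_mul : (num_sys_points F n * #|GLset|)%N = #|cc_or_co|.
Proof.
symmetry; apply: card_uniform_partition partition_sys_points.
by move=> A; rewrite sys_pointsE => /imsetP[s cs ->]; apply: card_gl_orbit.
Qed.

End Orbits.

Section ControllableForm.
Variables (F : fieldType) (m : nat).
Local Notation n := m.+1.
Implicit Types (w c : 'rV[F]_n) (s : triple F n).
Implicit Type z : 'M[F]_n * ('rV[F]_n * 'rV[F]_n).

Definition companion_triple w c : triple F n := (rVcompanion w, delta_mx 0 0, c).

Lemma rVcompanionX_delta w (j : 'I_n) :
  rVcompanion w ^+ j *m delta_mx 0 0 = delta_mx j 0 :> 'cV_n.
Proof.
apply: cVpoly_inj; rewrite cVpoly_companionX /cVpoly !trmx_delta !rVpoly_delta.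
by rewrite expr0 mulr1 modp_small // size_polyXn size_rVmonic ltnS.
Qed.

Lemma ctrl_mx_companion_triple w c : ctrl_mx (companion_triple w c) = 1%:M.
Proof.
by apply/matrixP => i j; rewrite [LHS]mxE rVcompanionX_delta !mxE eqxx andbT.
Qed.

Lemma rVcompanion_inj : injective (@rVcompanion F m).
Proof.
move=> w1 w2 /matrixP eq_w; apply/rowP => i.
by have := eq_w i ord_max; rewrite !mxE ltnn => /oppr_inj.
Qed.

Lemma ctrl_mx1_companion s : ctrl_mx s = 1%:M ->
  s = companion_triple (\row_i - trA s i ord_max) (trC s).
Proof.
move=> ctrl1; have col_ctrl (j : 'I_n) : trA s ^+ j *m trB s = delta_mx j 0.
  apply/matrixP => i k; rewrite (ord1 k).
  have := congr1 (fun M : 'M_n => M i j) ctrl1.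
  by rewrite !mxE eqxx andbT => ->.
have B_e0 : trB s = delta_mx 0 0 by rewrite -(col_ctrl 0) expr0 mul1mx.
have A_comp : trA s = rVcompanion (\row_i - trA s i ord_max).
  apply/matrixP => i j; rewrite mxE; case: ifP => [lt_jm|/negbT]; last first.
    rewrite mxE opprK -leqNgt => le_mj; congr (trA s i _); apply: val_inj.
    by apply/eqP; rewrite eqn_leq -ltnS ltn_ord; exact: le_mj.
  have := col_ctrl (Ordinal lt_jm).
  rewrite exprS -mulmxE -mulmxA col_ctrl -colE.
  by move/matrixP/(_ i 0); rewrite !mxE eqxx andbT => ->.
by rewrite /companion_triple -A_comp -B_e0 /trA /trB /trC -!surjective_pairing.
Qed.

Definition cc_param z : triple F n := gl_act z.1 (companion_triple z.2.1 z.2.2).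

Lemma ctrl_mx_cc_param z : z.1 \in unitmx -> ctrl_mx (cc_param z) = z.1.
Proof. by move=> uz; rewrite ctrl_mx_act // ctrl_mx_companion_triple mulmx1. Qed.

Lemma controllable_cc_param z :
  z.1 \in unitmx -> completely_controllable (cc_param z).
Proof. by move=> uz; rewrite /completely_controllable ctrl_mx_cc_param. Qed.

Lemma cc_param_inj : {in [pred z | z.1 \in unitmx] &, injective cc_param}.
Proof.
move=> [g1 [w1 c1]] [g2 [w2 c2]] ug1 ug2 eq_z.
have eq_g : g1 = g2.
  by rewrite -[g1](ctrl_mx_cc_param ug1) eq_z ctrl_mx_cc_param.
move: eq_z; rewrite /cc_param -{}eq_g /= => /(congr1 (gl_act (invmx g1))).
by rewrite !gl_actM ?unitmx_inv // mulVmx // !gl_act1 => -[/rVcompanion_inj -> ->].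
Qed.

Lemma cc_paramP s :
  completely_controllable s -> exists2 z, z.1 \in unitmx & s = cc_param z.
Proof.
move=> cs; set K := ctrl_mx s; set s0 := gl_act (invmx K) s.
have ctrl1 : ctrl_mx s0 = 1%:M by rewrite ctrl_mx_act ?unitmx_inv // mulVmx.
exists (K, (\row_i - trA s0 i ord_max, trC s0)) => //=.
rewrite /cc_param /= -ctrl_mx1_companion //.
by rewrite gl_actM ?unitmx_inv // mulmxV // gl_act1.
Qed.

End ControllableForm.

Section Counting.
Variable F : finFieldType.
Local Notation q := #|F|.

Lemma card_observable n :
  #|[set s : triple F n | completely_observable s]| =
  #|[set s : triple F n | completely_controllable s]|.
Proof.
rewrite -(card_preimset _ (can_inj (@dual_tripleK F n))); apply: eq_card => s.
by rewrite !inE /completely_observable /completely_controllable obs_mx_dual unitmx_tr.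
Qed.

Variable m : nat.
Local Notation n := m.+1.

Lemma card_observable_companion :
  #|[set x : 'rV[F]_n * 'rV[F]_n |
       completely_observable (companion_triple x.1 x.2)]| = #|coprime_pairs F n|.
Proof.
pose res (x : 'rV[F]_n * 'rV[F]_n) := (x.1, residue_form x.1 x.2).
have res_inj : injective res.
  by move=> [w1 u1] [w2 u2] [/= <-] /residue_form_inj ->.
rewrite -(card_preimset _ res_inj); apply: eq_card => x.
by rewrite !inE observable_companion.
Qed.

Lemma card_controllable :
  #|[set s : triple F n | completely_controllable s]|
  = (#|GLset F n| * q ^ (2 * n))%N.
Proof.
have -> : [set s : triple F n | completely_controllable s] =
          @cc_param F m @: setX (GLset F n) setT.
  apply/setP => s; rewrite inE; apply/idP/imsetP => [/cc_paramP[z uz ->]|[z]].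
    by exists z; rewrite ?inE ?andbT.
  by rewrite !inE andbT => uz ->; apply: controllable_cc_param.
rewrite card_in_imset; last first.
  by move=> z1 z2; rewrite !inE !andbT; apply: cc_param_inj.
by rewrite cardsX cardsT card_prod !card_mx !mul1n -expnD addnn mul2n.
Qed.

Lemma card_controllable_observable :
  #|[set s : triple F n | completely_controllable s && completely_observable s]|
  = (#|GLset F n| * #|coprime_pairs F n|)%N.
Proof.
set Obs := [set x : 'rV[F]_n * 'rV[F]_n |
              completely_observable (companion_triple x.1 x.2)].
have -> : [set s : triple F n | completely_controllable s && completely_observable s]
          = @cc_param F m @: setX (GLset F n) Obs.
  apply/setP => s; rewrite inE.
  apply/idP/imsetP => [/andP[/cc_paramP[z uz ->] os]|[z]].
    by exists z; rewrite // !inE uz -(observable_act _ uz).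
  rewrite !inE => /andP[uz oz] ->.
  by rewrite controllable_cc_param // observable_act.
rewrite card_in_imset ?cardsX ?card_observable_companion //.
by move=> z1 z2; rewrite !inE => /andP[uz1 _] /andP[uz2 _]; apply: cc_param_inj.
Qed.

End Counting.

Local Close Scope ring_scope.

Lemma num_sys_points0 (F : finFieldType) : num_sys_points F 0 = 1.
Proof.
apply/eqP; rewrite eqn_leq; apply/andP; split.
  apply: leq_trans (leq_imset_card _ _) _; apply: leq_trans (max_card _) _.
  by rewrite !card_prod !card_mx !muln0 !mul0n.
apply/card_gt0P; exists (gl_orbit (0 : triple F 0)%R).
apply/imsetP; exists 0%R => //.
by rewrite inE /completely_controllable unitmxE det_mx00 unitr1.
Qed.

Lemma num_sys_points_add_coprime (F : finFieldType) m :
  num_sys_points F m.+1 + #|coprime_pairs F m.+1| = 2 * #|F| ^ (2 * m.+1).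
Proof.
have GL_gt0 : 0 < #|GLset F m.+1|.
  by apply/card_gt0P; exists 1%:M%R; rewrite inE unitmx1.
apply/eqP; rewrite -(eqn_pmul2r GL_gt0) mulnDl num_sys_points_mul.
rewrite [#|coprime_pairs _ _| * _]mulnC -card_controllable_observable.
set CC := [set s : triple F m.+1 | completely_controllable s].
set CO := [set s : triple F m.+1 | completely_observable s].
have -> : cc_or_co F m.+1 = CC :|: CO by apply/setP => s; rewrite !inE.
have -> : [set s | completely_controllable s && completely_observable s] = CC :&: CO.
  by apply/setP => s; rewrite !inE.
rewrite cardsUI card_observable card_controllable addnn -mul2n -mulnA.
by rewrite [#|GLset _ _| * _]mulnC.
Qed.

Lemma num_sys_pointsS (F : finFieldType) m :
  num_sys_points F m.+1 = #|F| ^ (2 * m.+1) + #|F| ^ (2 * m).+1.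
Proof.
by have := num_sys_points_add_coprime F m; rewrite -(card_coprime_pairsS F m); lia.
Qed.

Theorem mainTheorem3 :
  forall (F : finFieldType),
    let q := #|F| in
    [/\ num_sys_points F 0 = 1,
        (forall n : nat, (0 < n)%N ->
           num_sys_points F n = (q ^ (2 * n) + q ^ (2 * n - 1))%N)
      & (forall N : nat,
           (\sum_(n < N.+1) num_sys_points F n)%N = (\sum_(k < (2 * N).+1) q ^ k)%N)].
Proof.
move=> F q; split; first exact: num_sys_points0.
  by case=> // m _; rewrite num_sys_pointsS mulnS add2n.
elim=> [|N IHN]; first by rewrite !big_ord1 num_sys_points0.
rewrite big_ord_recr /= IHN num_sys_pointsS -/q mulnS add2n.
rewrite (big_ord_recr (2 * N).+2) (big_ord_recr (2 * N).+1) /=; lia.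
Qed.
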